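(* Let $S>0$, $\zeta\in\{0,1\}$, $\phi\in(-1,1)$, and let $(u_n)_{n\in\mathbb{N}}$ be the $\phi$-market impact scenario defined below. Then there exists $R>0$ such that for all $x\in(-R,R)$ the scenario starting from $x$ is regular, i.e. $N(x)=+\infty$, where $N(x):=\inf\{n\in\mathbb{N}: s_n(x)=-S\}$ with $\inf\emptyset=+\infty$.
   Context: Fix $S>0$, $\zeta\in\{0,1\}$ and $\phi\in\mathbb{R}$. For $a,b\in\mathbb{R}$ write $a\vee b=\max(a,b)$. The $\phi$-market impact scenario starting from $x\in\mathbb{R}$ is the sequence of real-valued functions $(u_n)_{n\in\mathbb{N}}$ defined by $u_0(x)=x\vee(-S)$ and, for all $n\in\mathbb{N}$, $u_{n+1}(x)=\Big(\phi\big(1+\tfrac{s_n(x)}{S}\big)^{1+\zeta}u_n(x)\Big)\vee\big(-s_n(x)-S\big)$, where $s_n(x)=\sum_{k=0}^n u_k(x)$. *)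

From Stdlib Require Import Reals.
Open Scope R_scope.

Fixpoint scen (S : R) (zeta : nat) (phi : R) (x : R) (n : nat) : R * R :=
  match n with
  | O => let u0 := Rmax x (- S) in (u0, u0)
  | Datatypes.S m =>
      let (um, sm) := scen S zeta phi x m in
      let un := Rmax (phi * (1 + sm / S) ^ (1 + zeta) * um) (- sm - S) in
      (un, sm + un)
  end.

Definition u (S : R) (zeta : nat) (phi : R) (x : R) (n : nat) : R :=
  fst (scen S zeta phi x n).

Definition s (S : R) (zeta : nat) (phi : R) (x : R) (n : nat) : R :=
  snd (scen S zeta phi x n).

Definition regular (S : R) (zeta : nat) (phi : R) (x : R) : Prop :=
  forall n : nat, s S zeta phi x n <> - S.

(** As long as the cumulated impact [s_n] stays within [c S] of zero, the
    factor [phi (1 + s_n/S)^(1+zeta)] has modulus at most some [q < 1], so the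
    floor [-s_n - S] is never active and [|u_{n+1}| <= q |u_n|].  The weighted
    quantity [(1-q)|s_n| + q|u_n|] is then non-increasing, hence bounded by
    [|x|]; for [|x| < (1-q) c S] this keeps [|s_n| < c S] forever, and in
    particular [s_n] never reaches [-S]. *)

From Pilot Require Import Defs.
From Stdlib Require Import Reals Lra Psatz.
Open Scope R_scope.

Lemma neg_Rabs_le (y : R) : - Rabs y <= y.
Proof.
  rewrite <- Rabs_Ropp; rewrite <- (Ropp_involutive y) at 2.
  apply Ropp_le_contravar, Rle_abs.
Qed.

Lemma impact_factor_bound (zeta : nat) (c t : R) :
  zeta = 0%nat \/ zeta = 1%nat -> 0 <= c <= 1 -> Rabs t <= c ->
  Rabs ((1 + t) ^ (1 + zeta)) <= 1 + 3 * c.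
Proof.
  intros hzeta hc ht.
  assert (-c <= t <= c) by (split; [pose proof (neg_Rabs_le t) | pose proof (Rle_abs t)]; lra).
  rewrite Rabs_right by (apply Rle_ge, pow_le; lra).
  destruct hzeta as [-> | ->]; simpl; nra.
Qed.

Section Scenario.

Variables (S : R) (zeta : nat) (phi : R).
Hypothesis hS : 0 < S.
Hypothesis hzeta : zeta = 0%nat \/ zeta = 1%nat.

Notation u := (u S zeta phi).
Notation s := (s S zeta phi).

Lemma u_0 (x : R) : u x 0 = Rmax x (- S).
Proof. reflexivity. Qed.

Lemma s_0 (x : R) : s x 0 = Rmax x (- S).
Proof. reflexivity. Qed.

Lemma u_succ (x : R) (n : nat) :
  u x (Datatypes.S n) = Rmax (phi * (1 + s x n / S) ^ (1 + zeta) * u x n) (- s x n - S).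
Proof. unfold Defs.u, Defs.s; simpl; destruct (scen S zeta phi x n); reflexivity. Qed.

Lemma s_succ (x : R) (n : nat) : s x (Datatypes.S n) = s x n + u x (Datatypes.S n).
Proof. unfold Defs.u, Defs.s; simpl; destruct (scen S zeta phi x n); reflexivity. Qed.

Section SmallStart.

Variables (c q x : R).
Hypothesis hc : 0 < c <= 1 / 2.
Hypothesis hq : 0 <= q < 1.
Hypothesis hphi_q : Rabs phi * (1 + 3 * c) <= q.
Hypothesis hx : Rabs x < (1 - q) * c * S.

Definition weighted_bound (n : nat) : Prop :=
  (1 - q) * Rabs (s x n) + q * Rabs (u x n) <= Rabs x.

Lemma weighted_bound_small_sum (n : nat) : weighted_bound n -> Rabs (s x n) < c * S.
Proof.
  unfold weighted_bound; intros hw.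
  pose proof (Rabs_pos (u x n)).
  apply (Rmult_lt_reg_l (1 - q)); nra.
Qed.

Lemma impact_contracts (n : nat) :
  Rabs (s x n) < c * S ->
  Rabs (phi * (1 + s x n / S) ^ (1 + zeta) * u x n) <= q * Rabs (u x n).
Proof.
  intros hsn.
  assert (hratio : Rabs (s x n / S) <= c).
  { unfold Rdiv; rewrite Rabs_mult, Rabs_inv, (Rabs_right S) by lra.
    apply (Rmult_le_reg_r S); [lra|]; field_simplify; lra. }
  pose proof (impact_factor_bound zeta c _ hzeta ltac:(lra) hratio).
  pose proof (Rabs_pos phi); pose proof (Rabs_pos (u x n)).
  rewrite !Rabs_mult; apply Rmult_le_compat_r; [lra|].
  apply Rle_trans with (Rabs phi * (1 + 3 * c)); [apply Rmult_le_compat_l|]; lra.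
Qed.

Lemma weighted_bound_0 : weighted_bound 0.
Proof.
  unfold weighted_bound; rewrite u_0, s_0.
  assert (hmax : Rmax x (- S) = x).
  { apply Rmax_left; pose proof (neg_Rabs_le x).
    assert ((1 - q) * c <= 1) by nra.
    assert ((1 - q) * c * S <= S) by nra.
    lra. }
  rewrite hmax; lra.
Qed.

(* The floor [-s_n - S] lies below [-(1-c) S], whereas the impact term is at
   least [-q|u_n| >= -|x| > -(1-q) c S]. *)
Lemma u_succ_untruncated (n : nat) :
  weighted_bound n -> u x (Datatypes.S n) = phi * (1 + s x n / S) ^ (1 + zeta) * u x n.
Proof.
  intros hw.
  pose proof (weighted_bound_small_sum n hw) as hsn.
  pose proof (impact_contracts n hsn).
  pose proof (neg_Rabs_le (s x n)).
  pose proof (neg_Rabs_le (phi * (1 + s x n / S) ^ (1 + zeta) * u x n)).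
  pose proof (Rabs_pos (s x n)).
  unfold weighted_bound in hw.
  rewrite u_succ; apply Rmax_left; nra.
Qed.

Lemma weighted_bound_succ (n : nat) : weighted_bound n -> weighted_bound (Datatypes.S n).
Proof.
  intros hw.
  pose proof (impact_contracts n (weighted_bound_small_sum n hw)).
  pose proof (Rabs_triang (s x n) (u x (Datatypes.S n))).
  unfold weighted_bound in *.
  rewrite s_succ; rewrite (u_succ_untruncated n hw) in *.
  nra.
Qed.

Lemma weighted_bound_all (n : nat) : weighted_bound n.
Proof.
  induction n as [|n IH]; [exact weighted_bound_0 | exact (weighted_bound_succ n IH)].
Qed.

Lemma regular_of_small_start : regular S zeta phi x.
Proof.
  intros n hn.
  pose proof (weighted_bound_small_sum n (weighted_bound_all n)) as hsn.
  rewrite hn, Rabs_Ropp, Rabs_right in hsn by lra.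
  nra.
Qed.

End SmallStart.

End Scenario.

Theorem proposition4p3 (S : R) (zeta : nat) (phi : R)
  (hS : 0 < S) (hzeta : zeta = 0%nat \/ zeta = 1%nat) (hphi : -1 < phi < 1) :
  exists R0 : R, 0 < R0 /\
    forall x : R, - R0 < x < R0 -> regular S zeta phi x.
Proof.
  set (c := (1 - Rabs phi) / 6).
  set (q := (1 + Rabs phi) / 2).
  assert (hphi_abs : 0 <= Rabs phi < 1) by (split; [apply Rabs_pos | apply Rabs_def1; lra]).
  (* [q - |phi| (1 + 3c) = (1 - |phi|)^2 / 2] *)
  assert (hphi_q : Rabs phi * (1 + 3 * c) <= q) by (unfold q, c; nra).
  exists ((1 - q) * c * S); split.
  - unfold q, c; apply Rmult_lt_0_compat; nra.
  - intros x hx.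
    apply (regular_of_small_start S zeta phi hS hzeta c q x); unfold q, c in *;
      [lra | lra | exact hphi_q | apply Rabs_def1; lra].
Qed.
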